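(* Consider the commutative algebra of Laurent polynomials in nonzero variables $a,b,c,d,e$ with coefficients polynomial in parameters $G_1,G_2$, equipped with the log-canonical Poisson bracket determined by $\{a,b\}=ab$, $\{a,c\}=0$, $\{a,d\}=-\tfrac12 ad$, $\{a,e\}=\tfrac12 ae$, $\{b,c\}=0$, $\{b,d\}=-\tfrac12 bd$, $\{b,e\}=\tfrac12 be$, $\{c,d\}=-\tfrac12 cd$, $\{c,e\}=\tfrac12 ce$, $\{d,e\}=0$, and $\{G_1,\cdot\}=\{G_2,\cdot\}=0$. Then $G_1$, $G_2$ and $de$ are Casimir elements and the generic symplectic leaves are $4$-dimensional. Moreover, the functions $$x_1=-e\frac{a}{c}-d\frac{b}{c},\qquad x_2=-e\frac{b}{c}-G_1 d\frac{b}{a}-d\frac{b^2}{ac}-d\frac{c}{a},\qquad x_3=-G_2\frac{c}{b}-G_1\frac{c}{a}-\frac{b}{a}-\frac{c^2}{ab}-\frac{a}{b}$$ Poisson commute with $e$ and satisfy the cubic relation (the $PV$ monodromy cubic with $G_3=e$, $G_\infty=d$) $$x_1x_2x_3+x_1^2+x_2^2-(G_1G_\infty+G_2G_3)x_1-(G_2G_\infty+G_1G_3)x_2-G_3G_\infty x_3+G_\infty^2+G_3^2+G_1G_2G_3G_\infty=0.$$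
   Context: A log-canonical bracket is extended from the generators to all Laurent polynomials by bilinearity, antisymmetry and the Leibniz rule. Geometrically, $a,b,c,d,e$ are $\lambda$-lengths of a complete system of arcs on a Riemann sphere with three holes and two bordered cusps on one of the holes, and $G_1,G_2$ encode the perimeters of the two holes without cusps; this interpretation is not needed for the claim. *)

From HB Require Import structures.
From mathcomp Require Import all_boot all_order all_algebra.
From mathcomp Require Import fraction generic_quotient.
From mathcomp.multinomials Require Import mpoly.

Set Implicit Arguments.
Unset Strict Implicit.
Unset Printing Implicit Defensive.

Import GRing.Theory.
Local Open Scope ring_scope.

Section LogCanonical.
Variable K : fieldType.

Definition Pol := {mpoly K[7]}.
(* Ambient field of rational functions; the Laurent polynomial algebra
   (in a..e, with coefficients polynomial in G1,G2) is the subring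
   described by [is_laurent] below. *)
Definition Frac := {fraction Pol}.

Definition var (k : nat) : Frac := tofrac ('X_(inord k) : Pol).
Definition va := var 0.
Definition vb := var 1.
Definition vc := var 2.
Definition vd := var 3.
Definition ve := var 4.
Definition vG1 := var 5.
Definition vG2 := var 6.

Definition cst (x : K) : Frac := tofrac (x%:MP : Pol).

Definition is_laurent (f : Frac) : Prop :=
  exists (p : Pol) (m : nat), f = tofrac p / (va * vb * vc * vd * ve) ^+ m.

Definition fderiv (i : 'I_7) (f : Frac) : Frac :=
  let r := repr f in
  let n := (frac r).1 in let q := (frac r).2 in
  tofrac (mderiv i n * q - n * mderiv i q) / tofrac (q ^+ 2).

(* Upper-triangular part of the log-canonical coefficient matrix:
   {x_i, x_j} = w_ij x_i x_j. *)
Definition wU (i j : nat) : K :=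
  match i, j with
  | 0, 1 => 1
  | 0, 3 => - 2%:R^-1
  | 0, 4 => 2%:R^-1
  | 1, 3 => - 2%:R^-1
  | 1, 4 => 2%:R^-1
  | 2, 3 => - 2%:R^-1
  | 2, 4 => 2%:R^-1
  | _, _ => 0
  end.
Definition w (i j : 'I_7) : K := wU i j - wU j i.

(* The log-canonical bracket, i.e. the unique extension by bilinearity,
   antisymmetry and the Leibniz rule of the values on generators:
   {f,g} = sum_{i,j} w_ij x_i x_j (d_i f) (d_j g). *)
Definition pb (f g : Frac) : Frac :=
  \sum_(i < 7) \sum_(j < 7)
     cst (w i j) * tofrac ('X_i : Pol) * tofrac ('X_j : Pol)
       * fderiv i f * fderiv j g.

Definition casimir (x : Frac) : Prop :=
  is_laurent x /\ forall f, is_laurent f -> pb x f = 0.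

(* Poisson bivector matrix ({x_i, x_j})_{i,j}; its rank over the field of
   rational functions is the rank at a generic point, i.e. the dimension
   of the generic symplectic leaves. *)
Definition pb_matrix : 'M[Frac]_7 :=
  \matrix_(i < 7, j < 7) pb (tofrac ('X_i : Pol)) (tofrac ('X_j : Pol)).

Definition x1 : Frac := - ve * va / vc - vd * vb / vc.
Definition x2 : Frac :=
  - ve * vb / vc - vG1 * vd * vb / va - vd * vb ^+ 2 / (va * vc) - vd * vc / va.
Definition x3 : Frac :=
  - vG2 * vc / vb - vG1 * vc / va - vb / va - vc ^+ 2 / (va * vb) - va / vb.

Definition cubicPV : Frac :=
  let G3 := ve in let Gi := vd in
  x1 * x2 * x3 + x1 ^+ 2 + x2 ^+ 2
  - (vG1 * Gi + vG2 * G3) * x1 - (vG2 * Gi + vG1 * G3) * x2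
  - G3 * Gi * x3 + Gi ^+ 2 + G3 ^+ 2 + vG1 * vG2 * G3 * Gi.

End LogCanonical.

From HB Require Import structures.
From mathcomp Require Import all_boot all_order all_algebra.
From mathcomp Require Import fraction generic_quotient.
From mathcomp.multinomials Require Import mpoly.
From mathcomp Require Import ring.

Set Implicit Arguments.
Unset Strict Implicit.
Unset Printing Implicit Defensive.

Import GRing.Theory.
Local Open Scope ring_scope.

(* The bracket is log-canonical, {f, g} = sum_(i,j) w_ij x_i x_j (d_i f) (d_j g), so
   {x_k, f} = x_k sum_j w_kj x_j d_j f: a monomial in the generators is a Casimir as
   soon as the matching combination of rows of w vanishes, which is the case for the
   rows of G1 and G2 and for the sum of the rows of d and e. The column of e in w is
   (1/2, 1/2, 1/2, 0, ...), so bracketing with e is e/2 times the Euler operator in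
   a, b, c, which kills x1, x2, x3 because they are homogeneous of degree 0 in a, b, c.
   The matrix of brackets of the generators is diag(x) w diag(x), whose rank is that
   of w, namely 4. The cubic relation is an identity of rational functions. *)

Section Derivations.
Variables (F : fieldType) (I : Type) (D : I -> F -> F).
Hypothesis derD : forall i, {morph D i : u v / u + v}.
Hypothesis derM : forall i u v, D i (u * v) = D i u * v + u * D i v.

Lemma der0 i : D i 0 = 0.
Proof. by apply: (addrI (D i 0)); rewrite -derD !addr0. Qed.

Lemma der1 i : D i 1 = 0.
Proof.
by have := derM i 1 1; rewrite !mulr1 mul1r => E; apply: (addrI (D i 1)); rewrite -E addr0.
Qed.

Lemma derN i u : D i (- u) = - D i u.
Proof. by apply: (addrI (D i u)); rewrite -derD !subrr der0. Qed.

Lemma derB i u v : D i (u - v) = D i u - D i v.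
Proof. by rewrite derD derN. Qed.

Lemma derV i u : D i u^-1 = - D i u / u ^+ 2.
Proof.
have [->|u0] := eqVneq u 0; first by rewrite invr0 der0 oppr0 mul0r.
have E : u * D i u^-1 = - (D i u * u^-1).
  by apply/eqP; rewrite -addr_eq0 addrC -derM mulfV // der1.
by rewrite -[D i u^-1](mulKf u0) E; field.
Qed.

End Derivations.

Lemma mxrank_factor (F : fieldType) (m r : nat) (A : 'M[F]_m)
    (P : 'M_(m, r)) (Q : 'M_(r, m)) (R : 'M_(r, m)) (S : 'M_(m, r)) :
  A = P *m Q -> R *m A *m S = 1%:M -> \rank A = r.
Proof.
move=> AE RAS; apply/eqP; rewrite eqn_leq; apply/andP; split.
  by rewrite AE (leq_trans (mxrankM_maxl _ _)) ?rank_leq_col.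
by rewrite -{1}(mxrank1 F r) -RAS (leq_trans (mxrankM_maxl _ _)) ?mxrankM_maxr.
Qed.

Lemma sum_mul_delta (R : pzSemiRingType) (n : nat) (G : nat -> R) k : (k < n)%N ->
  \sum_(i < n) G i * ((i : nat) == k)%:R = G k.
Proof.
move=> kn; rewrite (bigD1 (Ordinal kn)) //= eqxx mulr1 big1 ?addr0 // => i.
by rewrite -(inj_eq val_inj) /= => /negPf ->; rewrite mulr0.
Qed.

Section LogCanonicalBracket.
Variables (F : fieldType) (n : nat) (x : nat -> F) (D : nat -> F -> F)
  (W : nat -> nat -> F).
Hypothesis derM : forall i u v, D i (u * v) = D i u * v + u * D i v.
Hypothesis der_x : forall i k, (i < n)%N -> (k < n)%N -> D i (x k) = (i == k)%:R.

Definition lcb (f g : F) : F :=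
  \sum_(i < n) \sum_(j < n) W i j * x i * x j * D i f * D j g.

Lemma lcb_xl k f : (k < n)%N ->
  lcb (x k) f = x k * \sum_(j < n) W k j * x j * D j f.
Proof.
move=> kn; rewrite /lcb.
transitivity (\sum_(i < n) (\sum_(j < n) W i j * x i * x j * D j f) * ((i : nat) == k)%:R).
  apply: eq_bigr => i _; rewrite mulr_suml -der_x //.
  by apply: eq_bigr => j _; rewrite mulrAC.
by rewrite (sum_mul_delta (fun i => \sum_(j < n) W i j * x i * x j * D j f)) // mulr_sumr;
  apply: eq_bigr => j _; ring.
Qed.

Lemma lcb_xr k f : (k < n)%N ->
  lcb f (x k) = x k * \sum_(i < n) W i k * x i * D i f.
Proof.
move=> kn; rewrite /lcb mulr_sumr; apply: eq_bigr => i _.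
under eq_bigr => j _ do rewrite der_x //.
by rewrite (sum_mul_delta (fun j => W i j * x i * x j * D i f)) //; ring.
Qed.

Lemma lcb_x i j : (i < n)%N -> (j < n)%N -> lcb (x i) (x j) = W i j * x i * x j.
Proof.
move=> ni nj; rewrite lcb_xl //; under eq_bigr => l _ do rewrite der_x //.
by rewrite (sum_mul_delta (fun l => W i l * x l)) //; ring.
Qed.

Lemma lcbMl u v f : lcb (u * v) f = u * lcb v f + v * lcb u f.
Proof.
rewrite /lcb !mulr_sumr -big_split; apply: eq_bigr => i _ /=.
by rewrite !mulr_sumr -big_split; apply: eq_bigr => j _; rewrite derM /=; ring.
Qed.

Lemma lcb_casimir_x k f : (k < n)%N -> (forall j, (j < n)%N -> W k j = 0) ->
  lcb (x k) f = 0.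
Proof.
by move=> kn Wk0; rewrite lcb_xl // big1 ?mulr0 // => j _; rewrite Wk0 ?mul0r.
Qed.

Lemma lcb_casimir_xx k l f : (k < n)%N -> (l < n)%N ->
  (forall j, (j < n)%N -> W k j + W l j = 0) -> lcb (x k * x l) f = 0.
Proof.
move=> kn ln Wkl0; rewrite lcbMl !lcb_xl // [x l * (x k * _)]mulrCA -!mulrDr -big_split /=.
by rewrite big1 ?mulr0 // => j _; rewrite -!mulrDl [W l j + _]addrC Wkl0 ?mul0r.
Qed.

Lemma rank_lcb_matrix : (forall i, (i < n)%N -> x i != 0) ->
  \rank (\matrix_(i < n, j < n) lcb (x i) (x j)) = \rank (\matrix_(i < n, j < n) W i j).
Proof.
move=> x_neq0; set d := \row_(i < n) x i.
have d_unit : diag_mx d \in unitmx.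
  by rewrite unitmxE det_diag unitfE; apply/prodf_neq0 => i _; rewrite mxE x_neq0.
have -> : \matrix_(i < n, j < n) lcb (x i) (x j)
          = diag_mx d *m \matrix_(i < n, j < n) W i j *m diag_mx d.
  by apply/matrixP => i j; rewrite mul_mx_diag mul_diag_mx !mxE lcb_x //; ring.
by rewrite mxrankMfree ?row_free_unit // (eqmxMfull _ _) // row_full_unit.
Qed.

End LogCanonicalBracket.

Section Weights.
Variable K : fieldType.
Hypothesis two_neq0 : (2%:R : K) != 0.

Definition wnat (i j : nat) : K := wU K i j - wU K j i.

Lemma wnat_G1 j : wnat 5 j = 0.
Proof. by case: j => [|[|[|[|[|[|[|j]]]]]]]; rewrite /wnat /= subrr. Qed.

Lemma wnat_G2 j : wnat 6 j = 0.
Proof. by case: j => [|[|[|[|[|[|[|j]]]]]]]; rewrite /wnat /= subrr. Qed.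

Lemma wnat_de j : wnat 3 j + wnat 4 j = 0.
Proof. by case: j => [|[|[|[|[|[|[|j]]]]]]]; rewrite /wnat /=; ring. Qed.

Definition wmx : 'M[K]_7 := \matrix_(i < 7, j < 7) wnat i j.

(* Column 4 of [wmx] is minus column 3, and columns 5 and 6 vanish. *)
Lemma wmx_factor : wmx = \matrix_(i < 7, k < 4) wnat i k *m
  \matrix_(k < 4, j < 7) (if (j < 4)%N then (k == j :> nat)%:R
                          else if j == 4 :> nat then - (k == 3 :> nat)%:R else 0).
Proof.
apply/matrixP => i j; rewrite !mxE !big_ord_recr big_ord0 /= !mxE.
by case: i => [[|[|[|[|[|[|[|i]]]]]]] Hi] //=; case: j => [[|[|[|[|[|[|[|j]]]]]]] Hj] //=;
  rewrite /wnat /=; ring.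
Qed.

(* A left inverse of the first four columns of [wmx]. *)
Definition wmx_left_inv : 'M[K]_(4, 7) := \matrix_(k < 4, i < 7)
  match k : nat, i : nat with
  | 0, 1 => -1 | 0, 2 => 1 | 1, 0 => 1 | 1, 2 => -1
  | 2, 0 => -1 | 2, 1 => 1 | 2, 3 => 2%:R | 3, 2 => - 2%:R
  | _, _ => 0 end.

Lemma wmx_minor :
  wmx_left_inv *m wmx *m \matrix_(j < 7, l < 4) (j == l :> nat)%:R = 1%:M.
Proof.
rewrite -mulmxA.
have -> : wmx *m \matrix_(j < 7, l < 4) (j == l :> nat)%:R = \matrix_(i < 7, k < 4) wnat i k.
  apply/matrixP => i j; rewrite !mxE !big_ord_recr big_ord0 /= !mxE.
  by case: i => [[|[|[|[|[|[|[|i]]]]]]] Hi] //=; case: j => [[|[|[|[|j]]]] Hj] //=; ring.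
apply/matrixP => i j; rewrite !mxE !big_ord_recr big_ord0 /= !mxE.
by case: i => [[|[|[|[|i]]]] Hi] //=; case: j => [[|[|[|[|j]]]] Hj] //=;
  rewrite /wnat /=; field.
Qed.

End Weights.

Lemma rank_wmx (K : fieldType) : (2%:R : K) != 0 -> \rank (wmx K) = 4%N.
Proof. by move=> two_neq0; apply: mxrank_factor (wmx_factor K) (wmx_minor two_neq0). Qed.

Section LogCanonicalPV.
Variables (K F : fieldType) (iota : {rmorphism K -> F}) (x : nat -> F) (D : nat -> F -> F).
Hypothesis two_neq0 : (2%:R : K) != 0.
Hypothesis derD : forall i, {morph D i : u v / u + v}.
Hypothesis derM : forall i u v, D i (u * v) = D i u * v + u * D i v.
Hypothesis der_x : forall i k, (i < 7)%N -> (k < 7)%N -> D i (x k) = (i == k)%:R.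
Hypothesis x_neq0 : forall k, (k < 7)%N -> x k != 0.

Local Notation br := (lcb 7 x D (fun i j => iota (wnat K i j))).
Local Notation X1 := (- x 4 * x 0 / x 2 - x 3 * x 1 / x 2).
Local Notation X2 :=
  (- x 4 * x 1 / x 2 - x 5 * x 3 * x 1 / x 0 - x 3 * x 1 ^+ 2 / (x 0 * x 2) - x 3 * x 2 / x 0).
Local Notation X3 :=
  (- x 6 * x 2 / x 1 - x 5 * x 2 / x 0 - x 1 / x 0 - x 2 ^+ 2 / (x 0 * x 1) - x 0 / x 1).

Lemma two_neq0_image : (2%:R : F) != 0.
Proof. by rewrite -(rmorph_nat iota) fmorph_eq0. Qed.

Lemma casimir_G1 f : br (x 5) f = 0.
Proof.
by apply: (lcb_casimir_x der_x) => // j _; rewrite wnat_G1 rmorph0.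
Qed.

Lemma casimir_G2 f : br (x 6) f = 0.
Proof.
by apply: (lcb_casimir_x der_x) => // j _; rewrite wnat_G2 rmorph0.
Qed.

Lemma casimir_de f : br (x 3 * x 4) f = 0.
Proof.
by apply: (lcb_casimir_xx derM der_x) => // j _; rewrite -rmorphD wnat_de rmorph0.
Qed.

Lemma bracket_e f : br f (x 4) = x 4 / 2%:R * (x 0 * D 0 f + x 1 * D 1 f + x 2 * D 2 f).
Proof.
rewrite (lcb_xr _ der_x) // !big_ord_recl big_ord0 !lift0 /wnat /=.
rewrite ?(subr0, subrr, rmorph0) fmorphV rmorph_nat; ring.
Qed.

Lemma x1_commutes_e : br X1 (x 4) = 0.
Proof.
rewrite bracket_e !(derB derD, derN derD, derM, derV derD derM) !der_x //=.
by field; rewrite ?x_neq0 ?two_neq0_image.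
Qed.

Lemma x2_commutes_e : br X2 (x 4) = 0.
Proof.
rewrite bracket_e !expr2 !(derB derD, derN derD, derM, derV derD derM) !der_x //=.
by field; rewrite ?x_neq0 ?two_neq0_image.
Qed.

Lemma x3_commutes_e : br X3 (x 4) = 0.
Proof.
rewrite bracket_e !expr2 !(derB derD, derN derD, derM, derV derD derM) !der_x //=.
by field; rewrite ?x_neq0 ?two_neq0_image.
Qed.

Lemma pv_cubic_identity :
  X1 * X2 * X3 + X1 ^+ 2 + X2 ^+ 2
  - (x 5 * x 3 + x 6 * x 4) * X1 - (x 6 * x 3 + x 5 * x 4) * X2
  - x 4 * x 3 * X3 + x 3 ^+ 2 + x 4 ^+ 2 + x 5 * x 6 * x 4 * x 3 = 0.
Proof. by field; rewrite ?x_neq0. Qed.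

Lemma rank_bracket_matrix : \rank (\matrix_(i < 7, j < 7) br (x i) (x j)) = 4%N.
Proof.
rewrite (rank_lcb_matrix _ der_x x_neq0).
have -> : \matrix_(i < 7, j < 7) iota (wnat K i j) = map_mx iota (wmx K).
  by apply/matrixP => i j; rewrite !mxE.
by rewrite mxrank_map rank_wmx.
Qed.

End LogCanonicalPV.

Lemma quotient_rule_indep (F : fieldType) (p q p' q' dp dq dp' dq' : F) :
  q != 0 -> q' != 0 -> p' * q = p * q' -> dp' * q + p' * dq = dp * q' + p * dq' ->
  (dp' * q' - p' * dq') / q' ^+ 2 = (dp * q - p * dq) / q ^+ 2.
Proof.
move=> q0 q'0 cross dcross.
have -> : dp' = (dp * q' + p * dq' - p' * dq) / q by rewrite -dcross addrK mulfK.
have -> : p' = p * q' / q by rewrite -cross mulfK.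
by field; rewrite q0 q'0.
Qed.

Lemma quotient_ruleD (F : fieldType) (p1 q1 p2 q2 dp1 dq1 dp2 dq2 : F) :
  q1 != 0 -> q2 != 0 ->
  ((dp1 * q2 + p1 * dq2 + (dp2 * q1 + p2 * dq1)) * (q1 * q2)
     - (p1 * q2 + p2 * q1) * (dq1 * q2 + q1 * dq2)) / (q1 * q2) ^+ 2
  = (dp1 * q1 - p1 * dq1) / q1 ^+ 2 + (dp2 * q2 - p2 * dq2) / q2 ^+ 2.
Proof. by move=> q10 q20; field; rewrite q10 q20. Qed.

Lemma quotient_ruleM (F : fieldType) (p1 q1 p2 q2 dp1 dq1 dp2 dq2 : F) :
  q1 != 0 -> q2 != 0 ->
  ((dp1 * p2 + p1 * dp2) * (q1 * q2) - p1 * p2 * (dq1 * q2 + q1 * dq2)) / (q1 * q2) ^+ 2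
  = (dp1 * q1 - p1 * dq1) / q1 ^+ 2 * (p2 / q2) + p1 / q1 * ((dp2 * q2 - p2 * dq2) / q2 ^+ 2).
Proof. by move=> q10 q20; field; rewrite q10 q20. Qed.

Section FractionDerivative.
Variable K : fieldType.
Local Notation Pol := (Pol K).
Local Notation Frac := (Frac K).

Lemma frac_numden (f : Frac) :
  f = tofrac (frac (repr f)).1 / tofrac (frac (repr f)).2.
Proof.
have dn0 : tofrac (frac (repr f)).2 != 0 :> Frac by rewrite tofrac_eq0 denom_ratioP.
apply: (canRL (mulfK dn0)); rewrite -[f in LHS]reprK; unlock tofrac.
rewrite /GRing.mul /= -FracField.pi_mul; apply/eqP; rewrite piE.
rewrite reprK equivfE /FracField.mulf !numden_Ratio ?oner_eq0 ?mulf_neq0 ?denom_ratioP //.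
  by rewrite !mulr1 mulrC.
all: exact: oner_neq0.
Qed.

Lemma fderiv_frac i (p q : Pol) : q != 0 ->
  fderiv i (tofrac p / tofrac q) =
  (tofrac (mderiv i p) * tofrac q - tofrac p * tofrac (mderiv i q)) / tofrac q ^+ 2.
Proof.
move=> q0; set f := _ / _; rewrite /fderiv.
set p' := (frac (repr f)).1; set q' := (frac (repr f)).2.
have Q0 : tofrac q != 0 :> Frac by rewrite tofrac_eq0.
have Q'0 : tofrac q' != 0 :> Frac by rewrite tofrac_eq0 denom_ratioP.
have Ef : tofrac p / tofrac q = tofrac p' / tofrac q' :> Frac := frac_numden f.
have cross : tofrac p' * tofrac q = tofrac p * tofrac q' :> Frac.
  by apply/eqP; rewrite -(eqr_div _ _ Q'0 Q0) Ef.
have dcross : tofrac (mderiv i p') * tofrac q + tofrac p' * tofrac (mderiv i q)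
    = tofrac (mderiv i p) * tofrac q' + tofrac p * tofrac (mderiv i q') :> Frac.
  rewrite -!tofracM -!tofracD -!mderivM.
  by move/eqP: cross; rewrite -!tofracM tofrac_eq => /eqP ->.
rewrite tofracB !tofracM -expr2.
exact: quotient_rule_indep Q0 Q'0 cross dcross.
Qed.

Lemma frac_ex (f : Frac) : exists p q, q != 0 /\ f = tofrac p / tofrac q.
Proof.
by exists (frac (repr f)).1, (frac (repr f)).2; split; [exact: denom_ratioP | exact: frac_numden].
Qed.

Lemma fderivD i : {morph @fderiv K i : f g / f + g}.
Proof.
move=> f g; have [p1 [q1 [q10 ->]]] := frac_ex f; have [p2 [q2 [q20 ->]]] := frac_ex g.
have Q1 : tofrac q1 != 0 :> Frac by rewrite tofrac_eq0.
have Q2 : tofrac q2 != 0 :> Frac by rewrite tofrac_eq0.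
rewrite (addf_div _ _ Q1 Q2) -!tofracM -tofracD.
rewrite !fderiv_frac ?mulf_neq0 // !mderivD !mderivM !tofracD !tofracM.
exact: quotient_ruleD Q1 Q2.
Qed.

Lemma fderivM i (f g : Frac) : fderiv i (f * g) = fderiv i f * g + f * fderiv i g.
Proof.
have [p1 [q1 [q10 ->]]] := frac_ex f; have [p2 [q2 [q20 ->]]] := frac_ex g.
have Q1 : tofrac q1 != 0 :> Frac by rewrite tofrac_eq0.
have Q2 : tofrac q2 != 0 :> Frac by rewrite tofrac_eq0.
rewrite mulf_div -!tofracM.
rewrite !fderiv_frac ?mulf_neq0 // !mderivM !tofracD !tofracM.
exact: quotient_ruleM Q1 Q2.
Qed.

Lemma mderivXX (a b : 'I_7) : mderiv a ('X_b : Pol) = (b == a)%:R.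
Proof.
rewrite mderivX mnm1E scaler_nat; case: eqP => [->|_] //=.
rewrite (_ : (U_(a) - U_(a))%MM = 0%MM) ?mpolyX0 //.
by apply/mnmP => l; rewrite mnmBE mnm0E subnn.
Qed.

Lemma fderiv_var i k : (i < 7)%N -> (k < 7)%N -> fderiv (inord i) (var K k) = (i == k)%:R.
Proof.
move=> i7 k7; rewrite -[var K k]divr1 -tofrac1 fderiv_frac ?oner_neq0 //.
rewrite -mpolyC1 mderivC mderivXX tofrac0 mulr0 subr0 mpolyC1 tofrac1 mulr1 expr1n divr1.
by rewrite rmorph_nat -(inj_eq val_inj) /= !inordK // eq_sym.
Qed.

Lemma var_neq0 k : (k < 7)%N -> var K k != 0.
Proof.
move=> k7; rewrite /var tofrac_eq0; apply/eqP => X0.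
by have /eqP := mderivXX (inord k) (inord k); rewrite X0 mderiv0 eqxx eq_sym oner_eq0.
Qed.

Lemma pb_lcb f g :
  pb f g = lcb 7 (var K) (fun i => fderiv (inord i)) (fun i j => cst (wnat K i j)) f g.
Proof.
rewrite /pb /lcb; apply: eq_bigr => i _; apply: eq_bigr => j _.
by rewrite /var !inord_val.
Qed.

End FractionDerivative.

Theorem mainTheorem2 (K : fieldType) (h2 : (2%:R : K) != 0) :
  [/\ [/\ casimir (vG1 K), casimir (vG2 K) & casimir (vd K * ve K)],
      \rank (pb_matrix K) = 4%N,
      [/\ pb (x1 K) (ve K) = 0, pb (x2 K) (ve K) = 0 & pb (x3 K) (ve K) = 0]
    & cubicPV K = 0].
Proof.
(* [cst] unfolds to this ring morphism. *)
pose iota : {rmorphism K -> Frac K} := (@tofrac (Pol K) \o @mpolyC 7 K)%FUN.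
have derD i := @fderivD K (@inord 6 i).
have derM i := @fderivM K (@inord 6 i).
have der_x := @fderiv_var K.
have x_neq0 := @var_neq0 K.
have laurent p : is_laurent (tofrac p : Frac K) by exists p, 0%N; rewrite expr0 divr1.
split; first (split; split).
- exact: laurent.
- by move=> f _; rewrite pb_lcb (casimir_G1 iota der_x).
- exact: laurent.
- by move=> f _; rewrite pb_lcb (casimir_G2 iota der_x).
- by rewrite -tofracM; apply: laurent.
- by move=> f _; rewrite pb_lcb (casimir_de iota derM der_x).
- have -> : pb_matrix K = \matrix_(i < 7, j < 7) pb (var K i) (var K j).
    by apply/matrixP => i j; rewrite !mxE /var !inord_val.
  under eq_mx do rewrite pb_lcb.
  exact: (rank_bracket_matrix iota h2 der_x x_neq0).
- split; rewrite pb_lcb.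
  + exact: (x1_commutes_e iota h2 derD derM der_x x_neq0).
  + exact: (x2_commutes_e iota h2 derD derM der_x x_neq0).
  + exact: (x3_commutes_e iota h2 derD derM der_x x_neq0).
- exact: pv_cubic_identity x_neq0.
Qed.
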